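(* Let $p$ and $q$ be distinct primes. Let $G$ be a direct product of a normal cyclic Sylow $p$-subgroup $P$ and a minimal non-abelian $q$-subgroup $Q$. Then $G$ is exponent-critical.
   Context: A finite group $G$ is exponent-critical if $\exp(G)$ is not the least common multiple of the exponents of the proper non-abelian subgroups of $G$. A minimal non-abelian group is a non-abelian group all of whose proper subgroups are abelian. *)

From mathcomp Require Import all_boot all_fingroup all_solvable.
Set Implicit Arguments. Unset Strict Implicit. Unset Printing Implicit Defensive.
Local Open Scope group_scope.

Definition minimal_nonabelian (gT : finGroupType) (G : {set gT}) : bool :=
  ~~ abelian G && [forall H : {group gT}, (H \proper G) ==> abelian H].

Definition exponent_critical (gT : finGroupType) (G : {set gT}) : bool :=
  exponent G != \big[lcmn/1%N]_(H : {group gT} | (H \proper G) && ~~ abelian H)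
                   exponent H.

From mathcomp Require Import all_boot all_fingroup all_solvable.
Local Open Scope group_scope.

(* Every non-abelian subgroup H of G = P \x Q splits as
   (P :&: H) \x (Q :&: H) since the factors have coprime orders, and Q :&: H
   cannot be a proper (hence abelian) subgroup of Q, so Q \subset H.  When H is
   proper, P :&: H is then a proper subgroup of the cyclic p-group P, so exp H
   divides (#|P| %/ p) * exp Q, a number not divisible by exp G = #|P| * exp Q.
   When P = 1, G = Q has no proper non-abelian subgroups at all. *)

Lemma exponent_critical_of_dvd {gT : finGroupType} (G : {group gT}) m :
    ~~ (exponent G %| m) ->
    (forall H : {group gT}, H \proper G -> ~~ abelian H -> exponent H %| m) ->
  exponent_critical G.
Proof.
move=> eGm eHm; apply: contra eGm => /eqP->.
apply: (big_ind (fun n => n %| m)) => [|a b|H /andP[ltHG /(eHm H ltHG)]] //.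
by rewrite dvdn_lcm => -> ->.
Qed.

Lemma minimal_nonabelian_exponent_critical {gT : finGroupType} {G : {group gT}} :
  minimal_nonabelian G -> exponent_critical G.
Proof.
case/andP=> nabG /forallP minG; apply: (exponent_critical_of_dvd G 1%N).
  by rewrite -trivg_exponent; apply: contra nabG => /eqP->; apply: abelian1.
by move=> H /(implyP (minG H)) ->.
Qed.

Lemma card_proper_pgroup_dvd {gT : finGroupType} {p : nat} {P K : {group gT}} :
  p.-group P -> K \proper P -> #|K| %| #|P| %/ p.
Proof.
move=> pP ltKP; have pK := pgroupS (proper_sub ltKP) pP.
have ntP : P :!=: 1 by apply: contraTneq ltKP => ->; rewrite properE sub1G andbF.
have [p_pr _ [n cardP]] := pgroup_pdiv pP ntP.
have lt_pK_pP := proper_card ltKP.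
rewrite cardP (card_pgroup pK) expnS mulKn ?prime_gt0 // dvdn_Pexp2l ?prime_gt1 //.
by rewrite -ltnS -(ltn_exp2l _ _ (prime_gt1 p_pr)) -cardP -(card_pgroup pK).
Qed.

Lemma card_pgroup_ndvd_div {gT : finGroupType} {p : nat} {P : {group gT}} :
  p.-group P -> P :!=: 1 -> ~~ (#|P| %| #|P| %/ p).
Proof.
move=> pP ntP; have [p_pr _ [n ->]] := pgroup_pdiv pP ntP.
by rewrite {2}expnS mulKn ?prime_gt0 // dvdn_Pexp2l ?prime_gt1 // ltnn.
Qed.

Lemma coprime_dprod_setI {gT : finGroupType} {G P Q H : {group gT}} :
  coprime #|P| #|Q| -> P \x Q = G -> H \subset G -> (P :&: H) \x (Q :&: H) = H.
Proof.
move=> coPQ defG sHG; have [_ mulPQ cPQ _] := dprodP defG.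
have [nsPG nsQG] := dprod_normal2 defG.
have pi'Q : \pi(P)^'.-group Q by rewrite /pgroup -coprime_pi' ?cardG_gt0.
have [hallP hallQ] := coprime_mulpG_Hall mulPQ (pgroup_pi P) pi'Q.
have hallPH := setI_normal_Hall nsPG hallP sHG.
have /complP[tiPQH mulPQH] : (Q :&: H)%G \in [complements to P :&: H in H].
  by rewrite (compl_pHall _ hallPH) (setI_normal_Hall nsQG hallQ sHG).
rewrite dprodE // (centsS (subsetIl P H)) //.
exact: subset_trans (subsetIl Q H) cPQ.
Qed.

Lemma nonabelian_sub_dprod_minimal {gT : finGroupType} {G P Q H : {group gT}} :
    coprime #|P| #|Q| -> P \x Q = G -> abelian P -> minimal_nonabelian Q ->
    H \subset G -> ~~ abelian H ->
  (P :&: H) \x Q = H.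
Proof.
move=> coPQ defG cPP /andP[nabQ /forallP minQ] sHG nabH.
have defH := coprime_dprod_setI coPQ defG sHG.
suff /setIidPl sQH : Q \subset H by rewrite sQH in defH.
apply: contraR nabH => not_sQH.
have ltQH_Q : Q :&: H \proper Q.
  by rewrite properEneq subsetIl andbT; apply: contraNneq not_sQH => <-; apply: subsetIr.
have [_ mulH cPQH _] := dprodP defH.
rewrite -mulH abelianM cPQH (abelianS (subsetIl P H) cPP) andbT.
exact: implyP (minQ (Q :&: H)%G) ltQH_Q.
Qed.

Theorem mainTheorem7 (gT : finGroupType) (G P Q : {group gT}) (p q : nat) :
  prime p -> prime q -> p != q ->
  P \in 'Syl_p(G) -> P <| G -> cyclic P ->
  q.-group Q -> minimal_nonabelian Q ->
  P \x Q = G ->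
  exponent_critical G.
Proof.
(* [P <| G] is implied by the direct product, and [q] need not be prime. *)
move=> _ _ neq_pq sylP _ cycP qQ mnQ defG.
have pP : p.-group P by move: sylP; rewrite inE => /pHall_pgroup.
have coPQ : coprime #|P| #|Q|.
  by rewrite (pnat_coprime pP) // (pi_pnat qQ) //; apply: contraNneq neq_pq => ->.
have [trivP | ntP] := eqVneq P 1%G.
  by move: defG; rewrite trivP dprod1g => <-; apply: minimal_nonabelian_exponent_critical.
have coP_eQ : coprime #|P| (exponent Q) := coprime_dvdr (exponent_dvdn Q) coPQ.
apply: (exponent_critical_of_dvd G (#|P| %/ p * exponent Q)).
  rewrite -(dprod_exponent defG) (exponent_cyclic cycP) dvdn_lcm Gauss_dvdl //.
  by rewrite (negPf (card_pgroup_ndvd_div pP ntP)).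
move=> H ltHG nabH.
have defH := nonabelian_sub_dprod_minimal coPQ defG (cyclic_abelian cycP) mnQ
  (proper_sub ltHG) nabH.
have ltPH_P : P :&: H \proper P.
  rewrite properEneq subsetIl andbT; apply: contraTneq ltHG => ePH.
  by rewrite -(dprodW defH) ePH (dprodW defG) properE subxx andbF.
rewrite -(dprod_exponent defH) (exponent_cyclic (cyclicS (subsetIl P H) cycP)).
by rewrite dvdn_lcm dvdn_mulr ?dvdn_mull ?(card_proper_pgroup_dvd pP).
Qed.
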